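(* Let $F:\mathbb{R}^n\rightrightarrows\mathbb{R}^p$ be a nearly convex set-valued mapping and $\Omega\subset\mathbb{R}^n$ a nearly convex set with $\operatorname{ri}(\operatorname{dom} F)\cap\operatorname{ri}\Omega\neq\emptyset$. Then the restriction $F_\Omega$ is nearly convex and $$\operatorname{ri}(\operatorname{gph} F_\Omega)=\{(x,y)\in\mathbb{R}^n\times\mathbb{R}^p: x\in\operatorname{ri}(\operatorname{dom} F)\cap\operatorname{ri}\Omega,\ y\in\operatorname{ri} F(x)\}.$$
   Context: A set $\Omega\subset\mathbb{R}^k$ is nearly convex if there is a convex set $C$ with $C\subset\Omega\subset\overline{C}$. For an arbitrary set $\Omega$, $\operatorname{ri}\Omega=\{a\in\Omega:\exists\delta>0,\ B(a;\delta)\cap\operatorname{aff}\Omega\subset\Omega\}$. For $F:\mathbb{R}^n\rightrightarrows\mathbb{R}^p$: $\operatorname{dom} F=\{x:F(x)\neq\emptyset\}$, $\operatorname{gph} F=\{(x,y):y\in F(x)\}$; $F$ is nearly convex if $\operatorname{gph} F$ is nearly convex. The restriction of $F$ to $\Omega$ is $F_\Omega(x)=F(x)$ if $x\in\Omega$ and $F_\Omega(x)=\emptyset$ otherwise. *)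

From HB Require Import structures.
From mathcomp Require Import all_boot all_order all_algebra.
From mathcomp Require Import all_classical all_reals all_analysis.
Set Implicit Arguments. Unset Strict Implicit. Unset Printing Implicit Defensive.
Import Order.TTheory GRing.Theory Num.Theory.
Import numFieldNormedType.Exports.
Local Open Scope classical_set_scope.
Local Open Scope ring_scope.

Section Defs.
Variable R : realType.
Variable V : normedModType R.

Definition convex_set (C : set V) : Prop :=
  forall x y, C x -> C y -> forall t : R, 0 <= t -> t <= 1 ->
    C (t *: x + (1 - t) *: y).

Definition affine_set (A : set V) : Prop :=
  forall x y, A x -> A y -> forall t : R, A (t *: x + (1 - t) *: y).

Definition aff (Omega : set V) : set V :=
  \bigcap_(A in [set A | affine_set A /\ Omega `<=` A]) A.

Definition nearly_convex (Omega : set V) : Prop :=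
  exists C : set V, convex_set C /\ C `<=` Omega /\ Omega `<=` closure C.

Definition ri (Omega : set V) : set V :=
  [set a | Omega a /\ exists2 delta : R, 0 < delta &
            ball a delta `&` aff Omega `<=` Omega].
End Defs.

Section SetValued.
Variables (R : realType) (n p : nat).

Definition sv_dom (F : 'rV[R]_n -> set 'rV[R]_p) : set 'rV[R]_n :=
  [set x | F x !=set0].

Definition sv_gph (F : 'rV[R]_n -> set 'rV[R]_p) : set ('rV[R]_n * 'rV[R]_p) :=
  [set z | F z.1 z.2].

Definition sv_nearly_convex (F : 'rV[R]_n -> set 'rV[R]_p) : Prop :=
  nearly_convex (sv_gph F).

Definition sv_restrict (F : 'rV[R]_n -> set 'rV[R]_p) (Omega : set 'rV[R]_n)
  : 'rV[R]_n -> set 'rV[R]_p :=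
  fun x => if `[< Omega x >] then F x else set0.
End SetValued.

From Pilot Require Import Defs.
From HB Require Import structures.
From mathcomp Require Import all_boot all_order all_algebra.
From mathcomp Require Import all_classical all_reals all_analysis.
From mathcomp Require Import ring lra.
Set Implicit Arguments. Unset Strict Implicit. Unset Printing Implicit Defensive.
Import Order.TTheory GRing.Theory Num.Theory.
Import numFieldNormedType.Exports.
Local Open Scope classical_set_scope.
Local Open Scope ring_scope.

(* A nearly convex set G with convex core K satisfies ri G = ri K, so the line
   segment principle holds in G, and z lies in ri G iff every segment from a
   point of G to z can be prolonged beyond z inside G.  This extension criterion
   gives ri (A `&` B) = ri A `&` ri B when the right-hand side is nonempty, and
   identifies ri (gph F) with the pairs (x, y) such that x is in ri (dom F) and
   y in ri (F x).  Since gph F_Omega = gph F `&` (Omega x R^p), the theorem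
   follows.  Finite dimension enters only through two facts: affine sets are
   closed, and nonempty convex sets have nonempty relative interior. *)

Section AffineHull.
Variables (R : realType) (V : normedModType R).
Implicit Types (S A C : set V) (a b x y z w : V) (e t : R).

Lemma ballP x e y : ball x e y <-> `|x - y| < e.
Proof. by rewrite -ball_normE. Qed.

Lemma closure_normP A x :
  closure A x <-> forall e, 0 < e -> exists2 a, A a & `|x - a| < e.
Proof.
split=> [Ax e e0|Ax B /nbhs_ballP [e /= e0 eB]].
  by have [a [Aa /ballP xa]] := Ax _ (nbhsx_ballx _ _ e0); exists a.
by have [a Aa xa] := Ax e e0; exists a; split=> //; apply/eB/ballP.
Qed.

Lemma aff_affine S : affine_set (aff S).
Proof.
by move=> x y Sx Sy t A [aA SA]; apply: (aA); [apply: (Sx A) | apply: (Sy A)].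
Qed.

Lemma sub_aff S x : S x -> aff S x.
Proof. by move=> Sx A [_ SA]; apply: SA. Qed.

Lemma aff_min S A : affine_set A -> S `<=` A -> aff S `<=` A.
Proof. by move=> aA SA x; apply. Qed.

Lemma affS S A : S `<=` A -> aff S `<=` aff A.
Proof. by move=> SA; apply: aff_min; [apply: aff_affine | move=> x /SA /sub_aff]. Qed.

Lemma ri_sub S x : ri S x -> S x.
Proof. by case. Qed.

Lemma combxx t x : t *: x + (1 - t) *: x = x.
Proof. by rewrite -scalerDl addrC subrK scale1r. Qed.

Lemma comb_extE e x z : (1 + e) *: z + (1 - (1 + e)) *: x = z + e *: (z - x).
Proof.
rewrite (_ : 1 - (1 + e) = - e); last by ring.
by rewrite scalerDl scale1r scaleNr scalerBr addrA.
Qed.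

Lemma ext_comb e w z : 0 < e ->
  z = (e / (1 + e)) *: w + (1 - e / (1 + e)) *: (z + e *: (z - w)).
Proof.
move=> e0; have e1 : 1 + e != 0 by rewrite gt_eqF // ltr_wpDr // ltW.
have -> : (1 - e / (1 + e)) *: (z + e *: (z - w)) =
    (1 - e / (1 + e)) *: z + (e / (1 + e)) *: (z - w).
  by rewrite scalerDr scalerA; congr (_ + _ *: _); field.
by rewrite scalerBr addrCA [X in _ + X]addrC subrK -scalerDl subrK scale1r.
Qed.

Lemma ext_comb_gt0 e : 0 < e -> 0 < e / (1 + e).
Proof. by move=> e0; rewrite divr_gt0 // ltr_wpDl // ltW. Qed.

Lemma ext_comb_le1 e : 0 < e -> e / (1 + e) <= 1.
Proof. by move=> e0; rewrite ler_pdivrMr ?ltr_wpDl ?ltW //; lra. Qed.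

Lemma ri_extension S z x : ri S z -> aff S x -> exists2 e0 : R, 0 < e0 &
  forall e, 0 < e -> e <= e0 -> S (z + e *: (z - x)).
Proof.
move=> [Sz [d d0 dS]] Sx; set c := `|z - x|.
have c0 : 0 <= c := normr_ge0 _.
have c1 : 0 < c + 1 := ltr_wpDl c0 ltr01.
exists (d / (c + 1)) => [|e e0 ee0]; first exact: divr_gt0.
apply: dS; split; last by rewrite -comb_extE; apply: aff_affine => //; apply: sub_aff.
apply/ballP; rewrite opprD addrA subrr add0r normrN normrZ gtr0_norm // -/c.
have : e * (c + 1) <= d by rewrite -ler_pdivlMr.
nra.
Qed.

Lemma closure_segment (P : set V) w z :
  (forall t, 0 < t -> t <= 1 -> P (t *: w + (1 - t) *: z)) -> closure P z.
Proof.
move=> Pseg; apply/closure_normP => e e0; set c := `|z - w|.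
have c0 : 0 <= c := normr_ge0 _.
set t := e / (e + c + 1).
have t0 : 0 < t by rewrite divr_gt0 //; lra.
have ht : t * (e + c + 1) = e by rewrite divfK // gt_eqF //; lra.
exists (t *: w + (1 - t) *: z); first by apply: Pseg => //; nra.
rewrite -{1}(combxx t z) opprD addrACA subrr addr0 -scalerBr normrZ gtr0_norm // -/c.
nra.
Qed.

End AffineHull.

Section SegmentPrinciple.
Variables (R : realType) (V : normedModType R).
Implicit Types (C S : set V) (a b w z : V) (t : R).

Lemma comb_invK t b z : t != 0 -> t *: (t^-1 *: (z - (1 - t) *: b)) + (1 - t) *: b = z.
Proof. by move=> t0; rewrite scalerA mulfV // scale1r subrK. Qed.

Lemma comb_invE t b z : t != 0 ->
  t^-1 *: (z - (1 - t) *: b) = t^-1 *: z + (1 - t^-1) *: b.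
Proof.
move=> t0; rewrite scalerBr scalerA; congr (_ + _); rewrite -scaleNr.
by congr (_ *: _); field.
Qed.

Lemma comb_inv_subE t a b w : t != 0 ->
  a - t^-1 *: (w - (1 - t) *: b) = t^-1 *: ((t *: a + (1 - t) *: b) - w).
Proof.
move=> t0; rewrite -[a in a - _]scale1r -(mulVf t0) -scalerA -scalerBr.
by congr (_ *: _); rewrite opprB addrA.
Qed.

Lemma ri_segment C a b t : Defs.convex_set C -> ri C a -> C b ->
  0 < t -> t <= 1 -> ri C (t *: a + (1 - t) *: b).
Proof.
move=> cC [Ca [d d0 dC]] Cb t0 t1; have tn0 : t != 0 by rewrite gt_eqF.
split; first exact: cC _ _ Ca Cb _ (ltW t0) t1.
exists (t * d) => [|w [/ballP zw Cw]]; first exact: mulr_gt0.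
rewrite -(comb_invK b w tn0); apply: (cC _ _ _ Cb _ (ltW t0) t1); apply: dC; split.
  apply/ballP; rewrite comb_inv_subE // normrZ gtr0_norm ?invr_gt0 //.
  by rewrite ltr_pdivrMl.
by rewrite comb_invE //; apply: aff_affine => //; apply: sub_aff.
Qed.

Lemma ri_half_ball S a d w : 0 < d -> ball a d `&` aff S `<=` S ->
  `|a - w| < d / 2 -> aff S w -> ri S w.
Proof.
move=> d0 dS aw Sw; have d2 : 0 < d / 2 by rewrite divr_gt0.
split; first by apply: dS; split=> //; apply/ballP; lra.
exists (d / 2) => // v [/ballP wv Sv]; apply: dS; split=> //; apply/ballP.
by apply: le_lt_trans (ler_distD w a v) _; rewrite [d]splitr ltrD.
Qed.

Lemma ri_segment_closure C a b t : Defs.convex_set C -> ri C a -> closure C b ->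
  aff C b -> 0 < t -> t <= 1 -> ri C (t *: a + (1 - t) *: b).
Proof.
move=> cC Ca Cb Sb t0 t1; have [_ [d d0 dC]] := Ca.
have tn0 : t != 0 by rewrite gt_eqF.
set z := t *: a + (1 - t) *: b.
have Sz : aff C z by apply: aff_affine => //; exact: sub_aff (ri_sub Ca).
have [b' Cb' bb'] : exists2 b', C b' & `|b - b'| < t * d / 2.
  by apply: (closure_normP C b).1 => //; rewrite !mulr_gt0.
rewrite -(comb_invK b' z tn0); apply: ri_segment => //.
apply: (ri_half_ball d0 dC); last first.
  by rewrite comb_invE //; apply: aff_affine => //; apply: sub_aff.
rewrite comb_inv_subE // /z opprD addrACA subrr add0r -scalerBr scalerA normrZ.
rewrite [`|_ * _|]ger0_norm ?mulr_ge0 ?invr_ge0 ?subr_ge0 ?(ltW t0) // distrC.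
rewrite -mulrA ltr_pdivrMl // mulrA; apply: le_lt_trans _ bb'.
by rewrite -[leRHS]mul1r ler_wpM2r //; lra.
Qed.

End SegmentPrinciple.

Definition affine_sets_closed (R : realType) (V : normedModType R) :=
  forall A : set V, affine_set A -> closure A `<=` A.

Definition convex_ri_neq0 (R : realType) (V : normedModType R) :=
  forall C : set V, Defs.convex_set C -> C !=set0 -> ri C !=set0.

Section NearlyConvexCore.
Variables (R : realType) (V : normedModType R).
Hypotheses (affV : affine_sets_closed V) (riV : convex_ri_neq0 V).
Variables (K G : set V).
Hypotheses (cK : Defs.convex_set K) (KG : K `<=` G) (GK : G `<=` closure K).

Lemma core_aff : G `<=` aff K.
Proof.
move=> x /GK Kx; apply: (affV (@aff_affine _ _ K)); move: Kx.
by apply: closureS => y; apply: sub_aff.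
Qed.

Lemma core_affE : aff G = aff K.
Proof.
apply/seteqP; split; last exact: affS.
by apply: aff_min; [apply: aff_affine | apply: core_aff].
Qed.

Lemma core_neq0 : G !=set0 -> K !=set0.
Proof.
move=> [z /GK Kz]; have [a Ka _] := (closure_normP K z).1 Kz 1 ltr01.
by exists a.
Qed.

Lemma core_ri_extension w z (e : R) : ri K w -> 0 < e ->
  G (z + e *: (z - w)) -> ri K z.
Proof.
move=> Kw e0 Gz; rewrite (ext_comb w z e0); apply: ri_segment_closure => //.
- exact: GK.
- exact: core_aff.
- exact: ext_comb_gt0.
- exact: ext_comb_le1.
Qed.

Lemma core_riE : ri G = ri K.
Proof.
apply/seteqP; split=> z; last first.
  move=> [Kz [d d0 dK]]; split; first exact: KG.
  by exists d => // v; rewrite core_affE => /dK /KG.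
move=> Gz; have [w Kw] := riV cK (core_neq0 (ex_intro _ z (ri_sub Gz))).
have [e e0 Ge] := ri_extension Gz (sub_aff (KG (ri_sub Kw))).
exact: core_ri_extension Kw e0 (Ge e e0 (lexx e)).
Qed.

End NearlyConvexCore.

Section NearlyConvex.
Variables (R : realType) (V : normedModType R).
Hypotheses (affV : affine_sets_closed V) (riV : convex_ri_neq0 V).
Variable G : set V.
Hypothesis ncG : nearly_convex G.

Lemma nc_ri_segment a b (t : R) : ri G a -> G b -> 0 < t -> t <= 1 ->
  ri G (t *: a + (1 - t) *: b).
Proof.
have [K [cK [KG GK]]] := ncG; rewrite (core_riE affV riV cK KG GK).
move=> Ka Gb t0 t1; apply: ri_segment_closure => //; first exact: GK.
exact: (core_aff affV GK).
Qed.

Lemma nc_ri_convex : Defs.convex_set (ri G).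
Proof.
move=> a b Ga Gb t t0 t1; have [->|tn0] := eqVneq t 0.
  by rewrite scale0r add0r subr0 scale1r.
by apply: (nc_ri_segment Ga (ri_sub Gb) _ t1); rewrite lt_neqAle eq_sym tn0.
Qed.

Lemma nc_ri_neq0 : G !=set0 -> ri G !=set0.
Proof.
have [K [cK [KG GK]]] := ncG; rewrite (core_riE affV riV cK KG GK).
by move/(core_neq0 GK); apply: riV.
Qed.

Lemma nc_ri_extension w z (e : R) : ri G w -> 0 < e ->
  G (z + e *: (z - w)) -> ri G z.
Proof.
have [K [cK [KG GK]]] := ncG; rewrite (core_riE affV riV cK KG GK).
exact: core_ri_extension.
Qed.

Lemma nc_riP z : ri G z <->
  G z /\ forall x, G x -> exists2 e : R, 0 < e & G (z + e *: (z - x)).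
Proof.
split=> [Gz|[Gz Gext]].
  split=> [|x Gx]; first exact: ri_sub Gz.
  by have [e e0 Ge] := ri_extension Gz (sub_aff Gx); exists e => //; apply: Ge.
have [w Gw] := nc_ri_neq0 (ex_intro _ z Gz).
by have [e e0 Ge] := Gext w (ri_sub Gw); apply: nc_ri_extension Gw e0 Ge.
Qed.

End NearlyConvex.

Section Intersection.
Variables (R : realType) (V : normedModType R).
Hypotheses (affV : affine_sets_closed V) (riV : convex_ri_neq0 V).
Variables (A B : set V).
Hypotheses (ncA : nearly_convex A) (ncB : nearly_convex B).
Hypothesis riAB : ri A `&` ri B !=set0.

Lemma nearly_convex_setI : nearly_convex (A `&` B).
Proof.
have [w [Aw Bw]] := riAB; exists (ri A `&` ri B); split; last split.
- move=> x y [Ax Bx] [Ay By] t t0 t1.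
  by split; [apply: (nc_ri_convex affV riV ncA) | apply: (nc_ri_convex affV riV ncB)].
- by move=> x [/ri_sub Ax /ri_sub Bx].
- move=> z [Az Bz]; apply: (closure_segment (w := w)) => t t0 t1.
  by split; [apply: (nc_ri_segment affV riV ncA) | apply: (nc_ri_segment affV riV ncB)].
Qed.

Lemma ri_setI : ri (A `&` B) = ri A `&` ri B.
Proof.
have [w [Aw Bw]] := riAB; apply/seteqP; split=> z.
  move=> ABz; have ABw : (A `&` B) w by split; apply: ri_sub.
  have [e e0 /(_ e e0 (lexx e)) [Ae Be]] := ri_extension ABz (sub_aff ABw).
  by split; [apply: (nc_ri_extension affV riV ncA Aw e0 Ae)
          | apply: (nc_ri_extension affV riV ncB Bw e0 Be)].
move=> [Az Bz]; apply/(nc_riP affV riV nearly_convex_setI).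
split=> [|x [Ax Bx]]; first by split; apply: ri_sub.
have [e1 e10 Ae] := ri_extension Az (sub_aff Ax).
have [e2 e20 Be] := ri_extension Bz (sub_aff Bx).
have e0 : 0 < Num.min e1 e2 by rewrite lt_min e10 e20.
exists (Num.min e1 e2) => //; split.
  by apply: Ae => //; rewrite ge_min lexx.
by apply: Be => //; rewrite ge_min lexx orbT.
Qed.

End Intersection.

Section Product.
Variables (R : realType) (U W : normedModType R).
Implicit Types (G : set (U * W)) (O : set U) (x : U) (y : W).

Lemma comb_pair (t : R) x x' y y' :
  t *: (x, y) + (1 - t) *: (x', y') = (t *: x + (1 - t) *: x', t *: y + (1 - t) *: y').
Proof. by []. Qed.

Lemma ext_pair (e : R) x x' y y' :
  (x, y) + e *: ((x, y) - (x', y')) = (x + e *: (x - x'), y + e *: (y - y')).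
Proof. by []. Qed.

Lemma norm_pairl x x' y : `|(x, y) - (x', y)| = `|x - x'|.
Proof. by rewrite prod_normE /= subrr normr0 max_l. Qed.

Lemma norm_pairr x y y' : `|(x, y) - (x, y')| = `|y - y'|.
Proof. by rewrite prod_normE /= subrr normr0 max_r. Qed.

Lemma norm_fst_le (z z' : U * W) : `|z.1 - z'.1| <= `|z - z'|.
Proof. by rewrite prod_normE le_max lexx. Qed.

Lemma aff_sectionl G y x : aff [set u | G (u, y)] x -> aff G (x, y).
Proof.
suff : aff [set u | G (u, y)] `<=` [set u | aff G (u, y)] by apply.
apply: aff_min => [u u' Gu Gu' t|u Gu]; last exact: (@sub_aff _ _ G (u, y)).
by have := aff_affine (Gu : aff G (u, y)) Gu' t; rewrite comb_pair combxx.
Qed.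

Lemma aff_sectionr G x y : aff [set v | G (x, v)] y -> aff G (x, y).
Proof.
suff : aff [set v | G (x, v)] `<=` [set v | aff G (x, v)] by apply.
apply: aff_min => [v v' Gv Gv' t|v Gv]; last exact: (@sub_aff _ _ G (x, v)).
by have := aff_affine (Gv : aff G (x, v)) Gv' t; rewrite comb_pair combxx.
Qed.

Lemma ri_sectionr G x y : ri G (x, y) -> ri [set v | G (x, v)] y.
Proof.
move=> [Gxy [d d0 dG]]; split=> //; exists d => // v [/ballP yv /aff_sectionr Gv].
by apply: dG; split=> //; apply/ballP; rewrite norm_pairr.
Qed.

Lemma nearly_convex_fst G : nearly_convex G -> nearly_convex (fst @` G).
Proof.
move=> [K [cK [KG GK]]]; exists (fst @` K); split; last split.
- move=> _ _ [a Ka <-] [b Kb <-] t t0 t1.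
  by exists (t *: a + (1 - t) *: b) => //; apply: cK.
- by move=> _ [z /KG Gz <-]; exists z.
move=> _ [z /GK Kz <-]; apply/closure_normP => e e0.
have [k Kk zk] := (closure_normP K z).1 Kz e e0.
by exists k.1; [exists k | apply: le_lt_trans (norm_fst_le z k) zk].
Qed.

Lemma nearly_convex_preimage_fst O : nearly_convex O -> nearly_convex (@fst U W @^-1` O).
Proof.
move=> [K [cK [KO OK]]]; exists (fst @^-1` K); split; last split.
- by move=> z z' Kz Kz' t t0 t1; apply: cK.
- by move=> z /KO.
move=> [x y] /OK Kx; apply/closure_normP => e e0.
have [k Kk xk] := (closure_normP K x).1 Kx e e0.
by exists (k, y); rewrite ?norm_pairl.
Qed.

Lemma ri_preimage_fst O : ri (@fst U W @^-1` O) = fst @^-1` ri O.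
Proof.
apply/seteqP; split=> -[x y] [Ox [d d0 dO]]; split=> //; exists d => //.
  move=> x' [/ballP xx' /(@aff_sectionl (@fst U W @^-1` O) y x') Ox'].
  by apply: (dO (x', y)); split=> //; apply/ballP; rewrite norm_pairl.
have affO : aff (@fst U W @^-1` O) `<=` fst @^-1` aff O.
  apply: aff_min => [z z' Oz Oz' t|z Oz]; first exact: aff_affine.
  exact: sub_aff.
move=> z [/ballP xz /affO Oz]; apply: dO; split=> //.
by apply/ballP; apply: le_lt_trans (norm_fst_le (x, y) z) xz.
Qed.

End Product.

Section GraphRi.
Variables (R : realType) (U W : normedModType R).
Hypotheses (affU : affine_sets_closed U) (riU : convex_ri_neq0 U).
Hypotheses (affUW : affine_sets_closed (U * W)%type)
  (riUW : convex_ri_neq0 (U * W)%type).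
Variable G : set (U * W).
Hypothesis ncG : nearly_convex G.

Lemma ri_fst_lift x : ri (fst @` G) x -> exists y, ri G (x, y).
Proof.
move=> Dx; have [[x1 y1] G1] : ri G !=set0.
  by have [[x' y] Gxy _] := ri_sub Dx; apply: (nc_ri_neq0 affUW riUW ncG); exists (x', y).
have D1 : (fst @` G) x1 by exists (x1, y1) => //; apply: ri_sub G1.
have [e e0 /(_ e e0 (lexx e)) [[x2 y2] G2 /= x2E]] := ri_extension Dx (sub_aff D1).
have := nc_ri_segment affUW riUW ncG G1 G2 (ext_comb_gt0 e0) (ext_comb_le1 e0).
by rewrite comb_pair x2E -ext_comb // => Gx; eexists; apply: Gx.
Qed.

Lemma ri_fst : ri (fst @` G) = fst @` ri G.
Proof.
apply/seteqP; split=> [x /ri_fst_lift [y Gxy]|_ [[x y] Gxy <-]]; first by exists (x, y).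
apply/(nc_riP affU riU (nearly_convex_fst ncG)); split.
  by exists (x, y) => //; apply: ri_sub Gxy.
move=> _ [[x' y'] G' <-]; have [e e0 Ge] := ri_extension Gxy (sub_aff G').
by exists e => //; exists ((x, y) + e *: ((x, y) - (x', y'))); first exact: Ge.
Qed.

Lemma ri_pairP x y : ri G (x, y) <-> ri (fst @` G) x /\ ri [set v | G (x, v)] y.
Proof.
split=> [Gxy|[Dx Fy]].
  by split; [rewrite ri_fst; exists (x, y) | apply: ri_sectionr].
have [y' Gxy'] := ri_fst_lift Dx.
have [e e0 /(_ e e0 (lexx e)) Fe] := ri_extension Fy (sub_aff (ri_sub Gxy')).
apply: (nc_ri_extension affUW riUW ncG Gxy' e0).
by rewrite ext_pair subrr scaler0 addr0.
Qed.

End GraphRi.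

Section SubconvexCombination.
Variables (R : realType) (V : normedModType R).

Lemma convex_subconvex_comb (C : set V) c0 k (d : 'I_k -> V) (l : 'I_k -> R) :
  Defs.convex_set C -> C c0 -> (forall i, C (c0 + d i)) ->
  (forall i, 0 <= l i) -> \sum_i l i <= 1 -> C (c0 + \sum_i l i *: d i).
Proof.
move=> cC Cc0; elim: k d l => [|k IHk] d l Cd l0 l1; first by rewrite big_ord0 addr0.
rewrite big_ord_recr /=; rewrite big_ord_recr /= in l1.
set s := \sum_(i < k) _ in l1; set lk := l ord_max in l1 *.
have s0 : 0 <= s by apply: sumr_ge0.
have [lk1|lk_neq1] := eqVneq lk 1.
  have s00 : s = 0 by apply/eqP; rewrite eq_le s0 andbT; lra.
  rewrite big1 ?add0r ?lk1 ?scale1r // => i _.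
  by rewrite (psumr_eq0P (fun j _ => l0 _) s00) ?scale0r.
have lk0 : 0 <= lk := l0 _.
have q0 : 0 < 1 - lk by rewrite subr_gt0 lt_neqAle lk_neq1 /=; lra.
pose l' i := l (widen_ord (leqnSn k) i) / (1 - lk).
have Cl' : C (c0 + \sum_i l' i *: d (widen_ord (leqnSn k) i)).
  apply: IHk => [i|i|]; first exact: Cd.
    by rewrite divr_ge0 ?l0 ?ltW.
  by rewrite /l' -mulr_suml -/s ler_pdivrMr // mul1r; lra.
have lk1 : lk <= 1 by lra.
have := cC _ _ (Cd ord_max) Cl' lk lk0 lk1.
have sumE : \sum_i (1 - lk) *: (l' i *: d (widen_ord (leqnSn k) i)) =
    \sum_(i < k) l (widen_ord (leqnSn k) i) *: d (widen_ord (leqnSn k) i).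
  by apply: eq_bigr => i _; rewrite scalerA /l' mulrC divfK ?gt_eqF.
by rewrite !scalerDr scaler_sumr addrACA combxx sumE addrCA [lk *: _ + _]addrC addrA.
Qed.

End SubconvexCombination.

Section RowVectors.
Variable R : realType.

Lemma mx_entry_norm_le k l (M : 'M[R]_(k, l)) i j : `|M i j| <= `|M|.
Proof.
by rewrite [leRHS]/Num.norm /= mx_normrE; apply/bigmax_geP; right; exists (i, j).
Qed.

Lemma mx_norm_le k l (M : 'M[R]_(k, l)) (c : R) : 0 <= c ->
  (forall i j, `|M i j| <= c) -> `|M| <= c.
Proof.
move=> c0 Mc; rewrite /Num.norm /= mx_normrE.
by apply/bigmax_leP; split=> // -[i j] _; apply: Mc.
Qed.

Lemma mx_norm_mulmx_le k l (u : 'rV[R]_k) (N : 'M[R]_(k, l)) :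
  `|u *m N| <= k%:R * (`|u| * `|N|).
Proof.
apply: mx_norm_le => [|i j]; first by rewrite !mulr_ge0.
rewrite mxE; apply: le_trans (ler_norm_sum _ _ _) _.
rewrite mulr_natl -[k in _ *+ k]card_ord -sumr_const; apply: ler_sum => i' _.
by rewrite normrM ler_pM ?mx_entry_norm_le.
Qed.

Lemma rV_spanning_rows m (S : set 'rV[R]_m) :
  exists k (M : 'M[R]_(k, m)), (forall i, S (row i M)) /\
    (forall s, S s -> (s <= M)%MS).
Proof.
pose P r := exists k (M : 'M[R]_(k, m)), (forall i, S (row i M)) /\ (r <= \rank M)%N.
have [r [[k [M [SM rM]]] nPr]] : exists r, P r /\ ~ P r.+1.
  apply: contrapT => noMax; suff : P m.+1.
    by move=> [k [M [_ /leq_trans /(_ (rank_leq_col M))]]]; rewrite ltnn.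
  elim: m.+1 => [|r IHr]; first by exists 0%N, 0; split=> // -[].
  by apply: contrapT => nPr; apply: noMax; exists r.
exists k, M; split=> // s Ss; apply: contrapT => /negP sM; apply: nPr.
exists (1 + k)%N, (col_mx s M); split.
  move=> i; case: (split_ordP i) => j ->; last by rewrite rowKd.
  by rewrite rowKu row_id.
have : (M < s + M)%MS by rewrite ltmxE addsmxSr addsmx_sub (negbTE sM).
rewrite ltmxErank => /andP[_ rMs].
by rewrite -addsmxE; apply: leq_ltn_trans rM rMs.
Qed.

Lemma affine0_mulmx m k (L : set 'rV[R]_m) (M : 'M[R]_(k, m)) :
  affine_set L -> L 0 -> (forall i, L (row i M)) -> forall u, L (u *m M).
Proof.
move=> aL L0 LM u.
have LZ v c : L v -> L (c *: v).
  by move=> Lv; have := aL v 0 Lv L0 c; rewrite scaler0 addr0.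
have LD v w : L v -> L w -> L (v + w).
  move=> Lv Lw; have := LZ _ 2 (aL v w Lv Lw (1 / 2)).
  have -> : 1 - 1 / 2 = 1 / 2 :> R by field.
  by rewrite -scalerDr scalerA mulrC divfK ?pnatr_eq0 // scale1r.
by rewrite mulmx_sum_row; elim/big_ind: _ => // i _; apply: LZ.
Qed.

End RowVectors.

Section RowVectorSpaces.
Variables (R : realType) (m : nat).

(* [A - a0] is the row space of some [M], i.e. the kernel of [cokermx M]. *)
Lemma rV_affine_sets_closed : affine_sets_closed 'rV[R]_m.
Proof.
move=> A aA x Ax; have [a0 Aa0 _] := (closure_normP A x).1 Ax 1 ltr01.
pose L := [set v | A (a0 + v)].
have aL : affine_set L.
  move=> v w Lv Lw t; have := aA _ _ Lv Lw t.
  by rewrite /L /= !scalerDr addrACA combxx.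
have L0 : L 0 by rewrite /L /= addr0.
have [k [M [LM SM]]] := rV_spanning_rows L.
suff /mulmxKpV xa0E : (x - a0 <= M)%MS.
  by have := affine0_mulmx aL L0 LM ((x - a0) *m pinvmx M); rewrite xa0E /L /= addrC subrK.
rewrite submxE -normr_le0.
apply/ler_addgt0Pr => e e0; rewrite add0r; set c := m%:R * `|cokermx M|.
have c1 : 0 < c + 1 by rewrite ltr_wpDl ?mulr_ge0.
have [a Aa xa] := (closure_normP A x).1 Ax (e / (c + 1)) (divr_gt0 e0 c1).
have aM : (a - a0) *m cokermx M = 0.
  by apply/eqP; rewrite -submxE; apply: SM; rewrite /L /= addrC subrK.
have -> : x - a0 = (x - a) + (a - a0) by rewrite addrA subrK.
rewrite mulmxDl aM addr0; apply: le_trans (mx_norm_mulmx_le _ _) _.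
rewrite mulrCA -/c; apply: le_trans (_ : e / (c + 1) * c <= e).
  by rewrite ler_wpM2r ?mulr_ge0 // ltW.
by rewrite mulrAC ler_pdivrMr // ler_wpM2l ?lerDl // ltW.
Qed.

Lemma aff_sub_rowspace (C : set 'rV[R]_m) c0 k (M : 'M[R]_(k, m)) :
  (forall s, C (c0 + s) -> (s <= M)%MS) -> aff C `<=` [set z | (z - c0 <= M)%MS].
Proof.
move=> CM; apply: aff_min => [z w zM wM t|z Cz] /=; last by apply: CM; rewrite addrC subrK.
rewrite -[c0 in _ - c0](combxx t) opprD addrACA -!scalerBr.
by rewrite addmx_sub // scalemx_sub.
Qed.

(* The rows of [M] lie in [C - c0] and span [aff C - c0]; the point of
   coordinates [(a, ..., a)] is interior to the simplex they span with [c0]. *)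
Lemma rV_convex_ri_neq0 : convex_ri_neq0 'rV[R]_m.
Proof.
move=> C cC [c0 Cc0].
have [k [M [CM /aff_sub_rowspace affM]]] := rV_spanning_rows [set v | C (c0 + v)].
pose a : R := (2 * (k%:R + 1))^-1.
have a0 : 0 < a by rewrite invr_gt0 mulr_gt0 // ltr_wpDl.
have C_near (lam : 'rV_k) : `|lam - const_mx a| <= a -> C (c0 + lam *m M).
  move=> la; have laj j : `|lam ord0 j - a| <= a.
    by have := mx_entry_norm_le (lam - const_mx a) ord0 j; rewrite !mxE => /le_trans; apply.
  rewrite mulmx_sum_row; apply: convex_subconvex_comb => // [j|].
    by have := laj j; rewrite ler_norml => /andP[]; lra.
  apply: le_trans (_ : \sum_(j < k) (a + a) <= 1).
    by apply: ler_sum => j _; have := laj j; rewrite ler_norml => /andP[]; lra.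
  rewrite sumr_const card_ord -mulr_natl.
  have : a * (2 * (k%:R + 1)) = 1 by rewrite mulVf // gt_eqF // mulr_gt0 // ltr_wpDl.
  nra.
set b := c0 + const_mx a *m M; set c := m%:R * `|pinvmx M|.
have c1 : 0 < c + 1 by rewrite ltr_wpDl ?mulr_ge0.
exists b; split; first by apply: C_near; rewrite subrr normr0 ltW.
exists (a / (c + 1)) => [|z [/ballP bz /affM zM]]; first exact: divr_gt0.
have zbM : (z - b <= M)%MS.
  by rewrite /b opprD addrA addmx_sub // -mulNmx submxMl.
have -> : z = c0 + (const_mx a + (z - b) *m pinvmx M) *m M.
  by rewrite mulmxDl mulmxKpV // addrA addrC subrK.
apply: C_near; rewrite addrC addKr; apply: le_trans (mx_norm_mulmx_le _ _) _.
rewrite mulrCA -/c; apply: le_trans (_ : a / (c + 1) * c <= a).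
  by rewrite ler_wpM2r ?mulr_ge0 // distrC ltW.
by rewrite mulrAC ler_pdivrMr // ler_wpM2l ?lerDl // ltW.
Qed.

End RowVectorSpaces.

Section Transport.
Variables (R : realType) (V W : normedModType R) (f : V -> W) (L : R).
Hypothesis f_comb : forall t x y, f (t *: x + (1 - t) *: y) = t *: f x + (1 - t) *: f y.
Hypotheses (f_inj : injective f) (L0 : 0 < L).
Hypothesis f_lip : forall x y, `|f x - f y| <= L * `|x - y|.

Lemma norm_image_lt x y (e : R) : `|x - y| < e / L -> `|f x - f y| < e.
Proof. by move=> xy; apply: le_lt_trans (f_lip x y) _; rewrite mulrC -ltr_pdivlMr. Qed.

Lemma image_comb_closed (A : set V) (t : R) x y : A (t *: x + (1 - t) *: y) ->
  (f @` A) (t *: f x + (1 - t) *: f y).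
Proof. by rewrite -f_comb; exists (t *: x + (1 - t) *: y). Qed.

Lemma aff_image (C : set V) : aff C `<=` f @^-1` aff (f @` C).
Proof.
apply: aff_min => [x y Cx Cy t|x Cx]; last by apply: sub_aff; exists x.
by rewrite /preimage /= f_comb; apply: aff_affine.
Qed.

Lemma affine_sets_closed_transport : affine_sets_closed W -> affine_sets_closed V.
Proof.
move=> affW A aA x Ax.
have afA : affine_set (f @` A).
  by move=> _ _ [a Aa <-] [b Ab <-] t; apply: image_comb_closed; apply: aA.
have : closure (f @` A) (f x).
  apply/closure_normP => e e0.
  have [a Aa xa] := (closure_normP A x).1 Ax (e / L) (divr_gt0 e0 L0).
  by exists (f a); [exists a | apply: norm_image_lt].
by move/(affW _ afA) => [a Aa /f_inj <-].
Qed.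

Lemma convex_ri_neq0_transport : convex_ri_neq0 W -> convex_ri_neq0 V.
Proof.
move=> riW C cC [c Cc].
have cfC : Defs.convex_set (f @` C).
  move=> _ _ [a Ca <-] [b Cb <-] t t0 t1.
  by apply: image_comb_closed; apply: cC.
have [_ [[b Cb <-] [d d0 dC]]] := riW _ cfC (ex_intro _ (f c) (ex_intro2 _ _ c Cc erefl)).
exists b; split=> //; exists (d / L) => [|z [/ballP bz /aff_image Cz]].
  exact: divr_gt0.
have [c' Cc' /f_inj <-] : (f @` C) (f z).
  by apply: dC; split=> //; apply/ballP; apply: norm_image_lt.
exact: Cc'.
Qed.

End Transport.

Section ProductRows.
Variables (R : realType) (n p : nat).

Lemma norm_row_mx_le (x : 'rV[R]_n * 'rV[R]_p) : `|row_mx x.1 x.2| <= `|x|.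
Proof.
apply: mx_norm_le => // i j; rewrite prod_normE le_max.
by case: (split_ordP j) => j' ->; rewrite ?row_mxEl ?row_mxEr mx_entry_norm_le ?orbT.
Qed.

Let pair_row (x : 'rV[R]_n * 'rV[R]_p) := row_mx x.1 x.2.

Lemma pair_row_comb t x y :
  pair_row (t *: x + (1 - t) *: y) = t *: pair_row x + (1 - t) *: pair_row y.
Proof. by rewrite /pair_row !scale_row_mx add_row_mx. Qed.

Lemma pair_row_inj : injective pair_row.
Proof. by move=> [x1 x2] [y1 y2] /eq_row_mx /= [-> ->]. Qed.

Lemma pair_row_lip x y : `|pair_row x - pair_row y| <= 1 * `|x - y|.
Proof. by rewrite mul1r /pair_row opp_row_mx add_row_mx; apply: (norm_row_mx_le (x - y)). Qed.

Lemma prod_affine_sets_closed : affine_sets_closed ('rV[R]_n * 'rV[R]_p)%type.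
Proof.
exact: (affine_sets_closed_transport pair_row_comb pair_row_inj ltr01 pair_row_lip
  (@rV_affine_sets_closed R (n + p))).
Qed.

Lemma prod_convex_ri_neq0 : convex_ri_neq0 ('rV[R]_n * 'rV[R]_p)%type.
Proof.
exact: (convex_ri_neq0_transport pair_row_comb pair_row_inj ltr01 pair_row_lip
  (@rV_convex_ri_neq0 R (n + p))).
Qed.

End ProductRows.

Section SetValued.
Variables (R : realType) (n p : nat).
Implicit Types (F : 'rV[R]_n -> set 'rV[R]_p) (Omega : set 'rV[R]_n).

Lemma sv_dom_fst F : sv_dom F = fst @` sv_gph F.
Proof.
apply/seteqP; split=> [x [y Fxy]|_ [[x y] Fxy <-]]; last by exists y.
by exists (x, y).
Qed.

Lemma sv_gph_restrict F Omega :
  sv_gph (sv_restrict F Omega) = sv_gph F `&` fst @^-1` Omega.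
Proof.
apply/seteqP; split=> -[x y]; rewrite /sv_gph /sv_restrict /=.
  by case: asboolP.
by case=> Fxy Ox; rewrite asboolT.
Qed.

End SetValued.

Theorem theorem3p5 (R : realType) (n p : nat)
  (F : 'rV[R]_n -> set 'rV[R]_p) (Omega : set 'rV[R]_n) :
  sv_nearly_convex F -> nearly_convex Omega ->
  ri (sv_dom F) `&` ri Omega !=set0 ->
  sv_nearly_convex (sv_restrict F Omega) /\
  ri (sv_gph (sv_restrict F Omega)) =
    [set z | (ri (sv_dom F) `&` ri Omega) z.1 /\ ri (F z.1) z.2].
Proof.
rewrite /sv_nearly_convex => ncG ncO [x [Dx Ox]].
have affU := @rV_affine_sets_closed R n; have riU := @rV_convex_ri_neq0 R n.
have affUW := @prod_affine_sets_closed R n p.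
have riUW := @prod_convex_ri_neq0 R n p.
have ncB := nearly_convex_preimage_fst 'rV[R]_p ncO.
have riGB : ri (sv_gph F) `&` ri (fst @^-1` Omega) !=set0.
  move: Dx Ox; rewrite sv_dom_fst (ri_fst affU riU affUW riUW ncG).
  by move=> -[[x' y] Gxy /= <-] Ox; exists (x', y); rewrite ri_preimage_fst.
rewrite sv_gph_restrict; split; first exact: (nearly_convex_setI affUW riUW ncG ncB riGB).
rewrite (ri_setI affUW riUW ncG ncB riGB) ri_preimage_fst sv_dom_fst.
by apply/seteqP; split=> -[x' y']; rewrite /= (ri_pairP affU riU affUW riUW ncG); tauto.
Qed.
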